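(* Let $H,K$ be groups, $G=H\times K$, and $\phi\in\operatorname{End}(G)$ with $\phi(h,k)=(\alpha(h)\beta(k),\delta(k))$, where $\alpha\in\operatorname{End}(H)$, $\beta\in\operatorname{Hom}(K,H)$ with $[\operatorname{im}\alpha,\operatorname{im}\beta]=1$, and $\delta\in\operatorname{End}(K)$. Let $\{k_j\}_{j\in\mathcal J}$ be a set of representatives of the $\delta$-conjugacy classes of $K$. For each $j$, the twisted stabiliser $\operatorname{Stab}_\delta(k_j)$ acts on the right on the set $\mathcal R[\alpha]$ of $\alpha$-conjugacy classes of $H$ by $([h]_\alpha,y)\mapsto[h\beta(y)]_\alpha$; let $r_j$ be the number of orbits of this action. Then $R(\phi)=\sum_{j\in\mathcal J}r_j$, where an infinite sum, or a sum having some term equal to $\infty$, is interpreted as $\infty$.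
   Context: For an endomorphism $\psi$ of a group $A$, $x,y\in A$ are $\psi$-conjugate if $x=gy\psi(g)^{-1}$ for some $g\in A$; $[x]_\psi$ is the class of $x$, $\mathcal R[\psi]$ the set of classes and $R(\psi)=|\mathcal R[\psi]|\in\mathbb{N}\cup\{\infty\}$. The $\psi$-stabiliser (twisted stabiliser) of $a\in A$ is the subgroup $\operatorname{Stab}_\psi(a)=\{b\in A\mid a=ba\psi(b)^{-1}\}$. *)

From Stdlib Require Import List Arith ClassicalEpsilon.
Import ListNotations.

Record group := Group {
  gcar :> Type;
  gmul : gcar -> gcar -> gcar;
  gone : gcar;
  ginv : gcar -> gcar;
  gmulA : forall x y z, gmul x (gmul y z) = gmul (gmul x y) z;
  gmul1 : forall x, gmul gone x = x;
  gmulV : forall x, gmul (ginv x) x = gone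
}.
Arguments gmul {g}.
Arguments gone {g}.
Arguments ginv {g}.

Definition is_hom (A B : group) (f : A -> B) : Prop :=
  forall x y, f (gmul x y) = gmul (f x) (f y).

Section Prod.
Variables H K : group.
Definition pmul (x y : gcar H * gcar K) : gcar H * gcar K :=
  (gmul (fst x) (fst y), gmul (snd x) (snd y)).
Definition pinv (x : gcar H * gcar K) : gcar H * gcar K :=
  (ginv (fst x), ginv (snd x)).
Lemma pmulA x y z : pmul x (pmul y z) = pmul (pmul x y) z.
Proof. destruct x, y, z; unfold pmul; simpl; rewrite !gmulA; reflexivity. Qed.
Lemma pmul1 x : pmul (gone, gone) x = x.
Proof. destruct x; unfold pmul; simpl; rewrite !gmul1; reflexivity. Qed.
Lemma pmulV x : pmul (pinv x) x = (gone, gone).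
Proof. destruct x; unfold pmul, pinv; simpl; rewrite !gmulV; reflexivity. Qed.
Definition prod_group : group :=
  Group (gcar H * gcar K) pmul (gone, gone) pinv pmulA pmul1 pmulV.
End Prod.

Definition tconj (A : group) (psi : A -> A) (x y : A) : Prop :=
  exists g : A, x = gmul (gmul g y) (ginv (psi g)).

Definition tstab (A : group) (psi : A -> A) (a : A) : A -> Prop :=
  fun b => a = gmul (gmul b a) (ginv (psi b)).

Inductive enat := Fin (n : nat) | Inf.

Definition has_n_classes (X : Type) (E : X -> X -> Prop) (n : nat) : Prop :=
  exists l : list X, length l = n /\
    ForallOrdPairs (fun a b => ~ E a b) l /\
    (forall x, exists y, In y l /\ E x y).

Definition nclasses (X : Type) (E : X -> X -> Prop) : enat :=
  match excluded_middle_informative (exists n, has_n_classes X E n) with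
  | left h => Fin (proj1_sig (constructive_indefinite_description _ h))
  | right _ => Inf
  end.

Definition reidemeister (A : group) (psi : A -> A) : enat :=
  nclasses (gcar A) (tconj A psi).

Definition efin (e : enat) : nat := match e with Fin n => n | Inf => 0 end.

Definition esum (J : Type) (r : J -> enat) : enat :=
  match excluded_middle_informative
          ((exists l : list J, NoDup l /\ forall j, In j l) /\
           (forall j, r j <> Inf)) with
  | left h =>
      let l := proj1_sig (constructive_indefinite_description _ (proj1 h)) in
      Fin (fold_right (fun j s => efin (r j) + s) 0 l)
  | right _ => Inf
  end.

(* The phi-conjugacy classes of G = H x K fibre over the delta-conjugacy
   classes of K: projecting to the second coordinate sends phi-classes onto
   delta-classes, every phi-class meets some slice  H x {k_j}, and two
   elements (h, k_j), (h', k_j) of one slice are phi-conjugate exactly when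
   [h']_alpha lies in the orbit of [h]_alpha under the twisted stabiliser
   Stab_delta(k_j) acting through beta. *)

From Stdlib Require Import List Arith Classical ClassicalEpsilon.

Section GroupIdentities.
Context {A : group}.

Lemma mulKg (x y : A) : gmul (ginv x) (gmul x y) = y.
Proof. rewrite gmulA, gmulV, gmul1. reflexivity. Qed.

Lemma mulg_idem_one (e : A) : gmul e e = e -> e = gone.
Proof.
  intros He. rewrite <- (mulKg e e), He. apply gmulV.
Qed.

Lemma mulgV (x : A) : gmul x (ginv x) = gone.
Proof. apply mulg_idem_one. rewrite <- gmulA, mulKg. reflexivity. Qed.

Lemma mulg1 (x : A) : gmul x gone = x.
Proof. rewrite <- (gmulV A x), gmulA, mulgV, gmul1. reflexivity. Qed.

Lemma inv_uniq (x y : A) : gmul x y = gone -> y = ginv x.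
Proof. intros Hxy. rewrite <- (mulKg x y), Hxy, mulg1. reflexivity. Qed.

Lemma mulgKV (w x : A) : gmul (gmul w x) (ginv x) = w.
Proof. rewrite <- gmulA, mulgV, mulg1. reflexivity. Qed.

Lemma mulgVK (w x : A) : gmul (gmul w (ginv x)) x = w.
Proof. rewrite <- gmulA, gmulV, mulg1. reflexivity. Qed.

Lemma invgK (x : A) : ginv (ginv x) = x.
Proof. symmetry. apply inv_uniq, gmulV. Qed.

Lemma invMg (x y : A) : ginv (gmul x y) = gmul (ginv y) (ginv x).
Proof. symmetry. apply inv_uniq. rewrite !gmulA, mulgKV, mulgV. reflexivity. Qed.

Lemma inv1 : ginv (@gone A) = gone.
Proof. symmetry. apply inv_uniq, gmul1. Qed.
End GroupIdentities.

Lemma hom_one {A B : group} (f : A -> B) : is_hom A B f -> f gone = gone.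
Proof. intros Hf. apply mulg_idem_one. rewrite <- Hf, gmul1. reflexivity. Qed.

Lemma hom_inv {A B : group} (f : A -> B) (Hf : is_hom A B f) (x : A) :
  f (ginv x) = ginv (f x).
Proof. apply inv_uniq. rewrite <- Hf, mulgV, (hom_one f Hf). reflexivity. Qed.

Ltac gsimpl := repeat progress (rewrite ?invMg, ?invgK, ?inv1, ?gmulA, ?mulgKV,
  ?mulgVK, ?mulgV, ?gmulV, ?gmul1, ?mulg1).

Section TwistedConjugacy.
Context {A : group} (psi : A -> A) (Hpsi : is_hom A A psi).

Lemma tconj_refl (x : A) : tconj A psi x x.
Proof. exists gone. rewrite (hom_one psi Hpsi). gsimpl. reflexivity. Qed.

Lemma tconj_sym (x y : A) : tconj A psi x y -> tconj A psi y x.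
Proof.
  intros [g ->]. exists (ginv g). rewrite (hom_inv psi Hpsi). gsimpl. reflexivity.
Qed.

Lemma tconj_trans (x y z : A) :
  tconj A psi x y -> tconj A psi y z -> tconj A psi x z.
Proof.
  intros [g ->] [g' ->]. exists (gmul g g'). rewrite Hpsi. gsimpl. reflexivity.
Qed.
End TwistedConjugacy.

Lemma FOP_app {T} (R : T -> T -> Prop) (p s : list T) :
  ForallOrdPairs R p -> ForallOrdPairs R s ->
  (forall x y, In x p -> In y s -> R x y) -> ForallOrdPairs R (p ++ s).
Proof.
  induction 1 as [|a p Ha Hp IH]; simpl; intros Hs Hc; [exact Hs|].
  constructor.
  - rewrite Forall_forall in *. intros y Hy.
    apply in_app_or in Hy as [Hy|Hy]; [apply Ha | apply Hc; [left|]]; auto.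
  - apply IH; [exact Hs|]. intros x y Hx Hy. apply Hc; [right|]; auto.
Qed.

Lemma FOP_map {T U} (R : U -> U -> Prop) (R' : T -> T -> Prop) (g : T -> U) l :
  (forall a b, In a l -> In b l -> R' a b -> R (g a) (g b)) ->
  ForallOrdPairs R' l -> ForallOrdPairs R (map g l).
Proof.
  intros HR Hl. induction Hl as [|a l Ha Hl IH]; simpl; constructor.
  - rewrite Forall_forall in *. intros y Hy. apply in_map_iff in Hy as [x [<- Hx]].
    apply HR; [left; reflexivity | right; exact Hx | apply Ha, Hx].
  - apply IH. intros x y Hx Hy. apply HR; right; assumption.
Qed.

Definition pairwise_inequiv {T} (E : T -> T -> Prop) (l : list T) : Prop :=
  ForallOrdPairs (fun a b => ~ E a b) l.

Section CountingClasses.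
Context {T : Type} (E : T -> T -> Prop).
Hypothesis Erefl : forall x, E x x.
Hypothesis Esym : forall x y, E x y -> E y x.
Hypothesis Etrans : forall x y z, E x y -> E y z -> E x z.

(* Pigeonhole: a partial transversal l1 all of whose classes meet l2 is no
   longer than l2, since choosing for each element of l1 an equivalent
   element of l2 is injective on l1. *)
Lemma pairwise_inequiv_length (l1 l2 : list T) :
  pairwise_inequiv E l1 -> (forall a, In a l1 -> exists b, In b l2 /\ E a b) ->
  length l1 <= length l2.
Proof.
  intros Hl1 Hcover.
  set (g a := epsilon (inhabits a) (fun b => In b l2 /\ E a b)).
  assert (Hg : forall a, In a l1 -> In (g a) l2 /\ E a (g a)).
  { intros a Ha. apply epsilon_spec, Hcover, Ha. }
  rewrite <- (length_map g l1). apply NoDup_incl_length.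
  - apply NoDup_iff_ForallOrdPairs, (FOP_map _ (fun a b => ~ E a b)); [|exact Hl1].
    intros a b Ha Hb Hab Hg_eq. apply Hab.
    apply Etrans with (g a); [apply Hg, Ha|]. rewrite Hg_eq. apply Esym, Hg, Hb.
  - intros b Hb. apply in_map_iff in Hb as [a [<- Ha]]. apply Hg, Ha.
Qed.

Lemma has_n_classes_unique (n m : nat) :
  has_n_classes T E n -> has_n_classes T E m -> n = m.
Proof.
  intros [l1 [<- [F1 C1]]] [l2 [<- [F2 C2]]].
  apply Nat.le_antisymm.
  - apply pairwise_inequiv_length; [exact F1|]. intros a _. apply C2.
  - apply pairwise_inequiv_length; [exact F2|]. intros a _. apply C1.
Qed.

Lemma nclasses_fin (n : nat) : has_n_classes T E n -> nclasses T E = Fin n.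
Proof.
  intros Hn. unfold nclasses.
  destruct (excluded_middle_informative _) as [h|h]; [|exfalso; eauto].
  destruct (constructive_indefinite_description _ h) as [m Hm]; simpl.
  f_equal. eapply has_n_classes_unique; eauto.
Qed.

Lemma thin_to_transversal (L : list T) : exists l, pairwise_inequiv E l /\
    (forall y, In y L -> exists z, In z l /\ E y z).
Proof.
  induction L as [|b L [l [Hl Hc]]].
  - exists nil; split; [constructor | intros y []].
  - destruct (classic (exists z, In z l /\ E b z)) as [Hb|Hnb].
    + exists l; split; [exact Hl|]. intros y [<-|Hy]; auto.
    + exists (b :: l); split.
      * constructor; [|exact Hl]. rewrite Forall_forall.
        intros z Hz Hbz. apply Hnb; eauto.
      * intros y [<-|Hy]; [exists b; split; [left|]; auto|].
        destruct (Hc y Hy) as [z [Hz Hyz]]. exists z; split; [right|]; auto.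
Qed.

Lemma finite_cover_has_n_classes :
  (exists L, forall x, exists y, In y L /\ E x y) -> exists n, has_n_classes T E n.
Proof.
  intros [L HL]. destruct (thin_to_transversal L) as [l [Hl Hc]].
  exists (length l), l. split; [reflexivity | split; [exact Hl|]].
  intros x. destruct (HL x) as [y [Hy Hxy]]. destruct (Hc y Hy) as [z [Hz Hyz]].
  exists z; split; eauto.
Qed.
End CountingClasses.

Lemma nclasses_inf {T} (E : T -> T -> Prop) :
  (forall n, ~ has_n_classes T E n) -> nclasses T E = Inf.
Proof.
  intros Hn. unfold nclasses.
  destruct (excluded_middle_informative _) as [[m Hm]|h]; [exfalso; eapply Hn; eauto|].
  reflexivity.
Qed.

Lemma nclasses_Fin_spec {T} (E : T -> T -> Prop) (n : nat) :
  nclasses T E = Fin n -> has_n_classes T E n.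
Proof.
  unfold nclasses. destruct (excluded_middle_informative _) as [h|h]; [|discriminate].
  destruct (constructive_indefinite_description _ h) as [m Hm]; simpl.
  intros Heq; injection Heq as <-; exact Hm.
Qed.

Lemma nclasses_Inf_spec {T} (E : T -> T -> Prop) :
  nclasses T E = Inf -> forall n, ~ has_n_classes T E n.
Proof.
  unfold nclasses. destruct (excluded_middle_informative _) as [h|h]; [discriminate|].
  intros _ n Hn. apply h. exists n; exact Hn.
Qed.

Section FibredCount.
Variables (X H J : Type) (E : X -> X -> Prop) (Ej : J -> H -> H -> Prop).
Variables (f : J -> H -> X) (h0 : H).
Hypothesis Erefl : forall x, E x x.
Hypothesis Esym : forall x y, E x y -> E y x.
Hypothesis Etrans : forall x y z, E x y -> E y z -> E x z.
Hypothesis fibres_cover : forall x, exists j h, E x (f j h).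
Hypothesis fibres_separated : forall i j h h', E (f i h) (f j h') -> i = j.
Hypothesis fibre_relation : forall j h h', Ej j h h' <-> E (f j h) (f j h').

Lemma Ej_refl j h : Ej j h h.
Proof. apply fibre_relation, Erefl. Qed.

Lemma Ej_sym j h h' : Ej j h h' -> Ej j h' h.
Proof. rewrite !fibre_relation; auto. Qed.

Lemma Ej_trans j a b c : Ej j a b -> Ej j b c -> Ej j a c.
Proof. rewrite !fibre_relation; eauto. Qed.

Let fibre_sum (lj : list J) : nat :=
  fold_right (fun j s => efin (nclasses H (Ej j)) + s) 0 lj.

Lemma fibre_transversals (lj : list J) :
  NoDup lj -> (forall j, nclasses H (Ej j) <> Inf) ->
  exists L, length L = fibre_sum lj /\ pairwise_inequiv E L /\
    (forall j h, In j lj -> exists y, In y L /\ E (f j h) y) /\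
    (forall y, In y L -> exists j h, In j lj /\ y = f j h).
Proof.
  intros Hnd Hfin. induction Hnd as [|j lj Hnin Hnd IH].
  { exists nil. repeat split; [constructor | intros j h [] | intros y []]. }
  destruct IH as [L [HLlen [HLineq [HLcover HLfib]]]].
  destruct (nclasses H (Ej j)) as [n|] eqn:Hn; [|exfalso; exact (Hfin j Hn)].
  destruct (nclasses_Fin_spec _ _ Hn) as [lh [Hlen [Hlh Hch]]].
  exists (map (f j) lh ++ L). split; [|split; [|split]].
  - unfold fibre_sum; simpl. rewrite Hn, length_app, length_map, Hlen, HLlen. reflexivity.
  - apply FOP_app; [| exact HLineq |].
    + apply (FOP_map _ (fun a b => ~ Ej j a b)); [|exact Hlh].
      intros a b _ _ Hab HE. apply Hab, fibre_relation, HE.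
    + intros x y Hx Hy HE. apply in_map_iff in Hx as [a [<- Ha]].
      destruct (HLfib y Hy) as [i [b [Hi ->]]].
      apply fibres_separated in HE. subst i. contradiction.
  - intros i h [<-|Hi].
    + destruct (Hch h) as [y [Hy Hhy]]. exists (f j y). split.
      * apply in_or_app; left; apply in_map, Hy.
      * apply fibre_relation, Hhy.
    + destruct (HLcover i h Hi) as [y [Hy Hhy]].
      exists y; split; [apply in_or_app; right|]; assumption.
  - intros y Hy. apply in_app_or in Hy as [Hy|Hy].
    + apply in_map_iff in Hy as [x [<- Hx]]. exists j, x; split; [left|]; reflexivity.
    + destruct (HLfib y Hy) as [i [b [Hi ->]]]. exists i, b; split; [right|]; auto.
Qed.

Lemma finite_cover_index (L : list X) :
  exists lj, forall j h, (exists y, In y L /\ E (f j h) y) -> In j lj.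
Proof.
  induction L as [|y L [lj Hlj]]; [exists nil; intros j h [y [[] _]]|].
  destruct (fibres_cover y) as [j0 [h1 Hy]]. exists (j0 :: lj).
  intros j h [y' [[<-|Hy'] HE]].
  - left. symmetry. eapply fibres_separated, Etrans; eauto.
  - right. apply Hlj with h; eauto.
Qed.

Lemma finite_cover_fibre (j : J) (L : list X) : exists lh, forall h,
  (exists y, In y L /\ E (f j h) y) -> exists h', In h' lh /\ Ej j h h'.
Proof.
  induction L as [|y L [lh Hlh]]; [exists nil; intros h [y [[] _]]|].
  destruct (classic (exists h1, E y (f j h1))) as [[h1 Hh1]|Hnone].
  - exists (h1 :: lh). intros h [y' [[<-|Hy'] HE]].
    + exists h1; split; [left; reflexivity | apply fibre_relation; eauto].
    + destruct (Hlh h) as [h' [Hh' Hhh']]; eauto. exists h'; split; [right|]; auto.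
  - exists lh. intros h [y' [[<-|Hy'] HE]]; [|apply Hlh; eauto].
    exfalso. apply Hnone. exists h. apply Esym, HE.
Qed.

Theorem nclasses_fibred : nclasses X E = esum J (fun j => nclasses H (Ej j)).
Proof.
  unfold esum. destruct (excluded_middle_informative _) as [[HJfin Hfin]|Hinf].
  -
    cbv zeta. destruct (constructive_indefinite_description _ _) as [lj [Hnd Hall]].
    simpl. destruct (fibre_transversals lj Hnd Hfin) as [L [HL1 [HL2 [HL3 _]]]].
    apply nclasses_fin; auto. exists L. split; [exact HL1 | split; [exact HL2|]].
    intros x. destruct (fibres_cover x) as [j [h Hx]].
    destruct (HL3 j h (Hall j)) as [y [Hy Hhy]]. exists y; split; eauto.
  - (* a finite transversal of E would bound both J and every fibre *)
    apply nclasses_inf. intros n [L [_ [_ HL]]]. apply Hinf. split.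
    + destruct (finite_cover_index L) as [lj Hlj].
      exists (nodup (fun i j => excluded_middle_informative (i = j)) lj).
      split; [apply NoDup_nodup|]. intros j. apply nodup_In, (Hlj j h0), HL.
    + intros j Hj. destruct (finite_cover_fibre j L) as [lh Hlh].
      destruct (finite_cover_has_n_classes (Ej j) (Ej_refl j) (Ej_sym j) (Ej_trans j))
        as [m Hm].
      * exists lh. intros h. apply Hlh, HL.
      * exact (nclasses_Inf_spec _ Hj m Hm).
Qed.
End FibredCount.

Section ProductEndomorphism.
Variables (H K : group) (alpha : H -> H) (beta : K -> H) (delta : K -> K).
Hypothesis halpha : is_hom H H alpha.
Hypothesis hbeta : is_hom K H beta.
Hypothesis hdelta : is_hom K K delta.
Hypothesis hcomm : forall h k, gmul (alpha h) (beta k) = gmul (beta k) (alpha h).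

Definition prod_endo (x : prod_group H K) : prod_group H K :=
  (gmul (alpha (fst x)) (beta (snd x)), delta (snd x)).

(* phi is an endomorphism because im alpha and im beta commute. *)
Lemma prod_endo_hom : is_hom (prod_group H K) (prod_group H K) prod_endo.
Proof.
  intros [x1 x2] [y1 y2]. unfold prod_endo; simpl; unfold pmul; simpl.
  rewrite halpha, hbeta, hdelta. f_equal. gsimpl.
  rewrite <- (gmulA _ (alpha x1) (alpha y1) (beta x2)), hcomm. gsimpl. reflexivity.
Qed.

(* The relation on H whose classes are the orbits of Stab_delta(k) acting on
   R[alpha] by ([h]_alpha, y) |-> [h beta(y)]_alpha. *)
Definition stab_orbit_rel (k : K) (h h' : H) : Prop :=
  exists y, tstab K delta k y /\ tconj H alpha h' (gmul h (beta y)).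

Lemma prod_endo_tconj (h h' : H) (k k' : K) :
  tconj (prod_group H K) prod_endo (h, k) (h', k') <->
  exists g1 g2, h = gmul (gmul g1 h') (ginv (gmul (alpha g1) (beta g2))) /\
                k = gmul (gmul g2 k') (ginv (delta g2)).
Proof.
  split.
  - intros [[g1 g2] Hg]. injection Hg as Hh Hk. exists g1, g2; split; assumption.
  - intros [g1 [g2 [Hh Hk]]]. exists (g1, g2).
    unfold prod_endo; simpl; unfold pmul, pinv; simpl. rewrite <- Hh, <- Hk. reflexivity.
Qed.

(* Every phi-class meets the slice over any delta-conjugate of its second
   coordinate: if k = l k' delta(l)^-1 then (h, k) ~ (h beta(l), k'). *)
Lemma prod_endo_meets_slice (h : H) (k k' : K) :
  tconj K delta k k' -> exists h', tconj (prod_group H K) prod_endo (h, k) (h', k').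
Proof.
  intros [l Hl]. exists (gmul h (beta l)). apply prod_endo_tconj.
  exists gone, l. split; [|exact Hl]. rewrite (hom_one alpha halpha). gsimpl. reflexivity.
Qed.

Lemma prod_endo_tconj_snd (h h' : H) (k k' : K) :
  tconj (prod_group H K) prod_endo (h, k) (h', k') -> tconj K delta k k'.
Proof. intros Hx. apply prod_endo_tconj in Hx as [_ [g2 [_ Hk]]]. exists g2; exact Hk. Qed.

(* Within the slice H x {k}, phi-conjugacy is the orbit relation of
   Stab_delta(k): conjugating by (g, y) with y in the stabiliser turns h' into
   g h' alpha(g)^-1 beta(y)^-1, and alpha and beta commute. *)
Lemma prod_endo_slice_tconj (k : K) (h h' : H) :
  stab_orbit_rel k h h' <-> tconj (prod_group H K) prod_endo (h, k) (h', k).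
Proof.
  rewrite prod_endo_tconj. split.
  - intros [y [Hy [g ->]]]. exists (ginv g), y. split; [|exact Hy].
    rewrite (hcomm (ginv g) y), (hom_inv alpha halpha). gsimpl. reflexivity.
  - intros [g1 [g2 [-> Hk]]]. exists g2. split; [exact Hk|]. exists (ginv g1).
    rewrite (hcomm g1 g2), (hom_inv alpha halpha). gsimpl. reflexivity.
Qed.
End ProductEndomorphism.

Theorem mainTheorem9
  (H K : group)
  (alpha : gcar H -> gcar H) (beta : gcar K -> gcar H) (delta : gcar K -> gcar K)
  (halpha : is_hom H H alpha) (hbeta : is_hom K H beta) (hdelta : is_hom K K delta)
  (hcomm : forall (h : gcar H) (k : gcar K),
             gmul (alpha h) (beta k) = gmul (beta k) (alpha h))
  (J : Type) (kj : J -> gcar K)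
  (hrep_cover : forall k : gcar K, exists j : J, tconj K delta k (kj j))
  (hrep_distinct : forall i j : J, tconj K delta (kj i) (kj j) -> i = j) :
  let phi : gcar (prod_group H K) -> gcar (prod_group H K) :=
    fun x => (gmul (alpha (fst x)) (beta (snd x)), delta (snd x)) in
  (* r_j : number of orbits of Stab_delta(k_j) acting on R[alpha] by
     ([h]_alpha, y) |-> [h beta(y)]_alpha; orbits are described on
     representatives h : H via  h ~ h'  iff  [h'] = [h beta(y)] for some y *)
  let r : J -> enat := fun j =>
    nclasses (gcar H) (fun h h' : gcar H =>
      exists y : gcar K, tstab K delta (kj j) y /\
                         tconj H alpha h' (gmul h (beta y))) in
  reidemeister (prod_group H K) phi = esum J r.
Proof.
  intros phi r.
  change (nclasses _ (tconj (prod_group H K) (prod_endo H K alpha beta delta)) =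
          esum J (fun j => nclasses H (stab_orbit_rel H K alpha beta delta (kj j)))).
  pose proof (prod_endo_hom H K alpha beta delta halpha hbeta hdelta hcomm) as Hphi.
  apply (nclasses_fibred _ _ _ _ _ (fun j h => (h, kj j)) gone).
  - apply (tconj_refl _ Hphi).
  - apply (tconj_sym _ Hphi).
  - apply (tconj_trans _ Hphi).
  - intros [h k]. destruct (hrep_cover k) as [j Hj].
    destruct (prod_endo_meets_slice H K alpha beta delta halpha h k (kj j) Hj) as [h' Hh'].
    exists j, h'. exact Hh'.
  - intros i j h h' Hx. apply hrep_distinct, (prod_endo_tconj_snd H K alpha beta delta _ _ _ _ Hx).
  - intros j h h'. apply (prod_endo_slice_tconj H K alpha beta delta halpha hcomm).
Qed.
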